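(* Consider the coupled opinion–network system described in the context, and assume in addition that (i) there is a constant $c_\phi>0$ with $\phi(r)>c_\phi$ for all $r\in[-2,2]$, and (ii) there is a constant $c_f>0$ such that $f^+(w)_{ij}>c_f$ for all $i\neq j$ and all $w\in[0,1]^{N\times N}$ with $w_{ij}=0$. Then the population reaches consensus: there exists $x^*\in[-1,1]$ such that $x_i(t)\to x^*$ as $t\to\infty$ for every $i=1,\dots,N$ (equivalently, the opinion diameter $D(t)=\max_{i,j}|x_j(t)-x_i(t)|$ tends to $0$).
   Context: There are $N$ individuals with opinions $x_i(t)\in[-1,1]$ and edge weights $w_{ij}(t)\in[0,1]$, $i,j=1,\dots,N$. The degree is $k_i=\sum_{j=1}^N w_{ij}$. Given an interaction function $\phi:[-2,2]\to[0,1]$ and maps $f^+,f^-:[0,1]^{N\times N}\to\mathbb{R}_{\ge 0}^{N\times N}$, the system is $\frac{dx_i}{dt}=\frac{1}{k_i}\sum_{j\neq i} w_{ij}\,\phi(x_j-x_i)(x_j-x_i)$ for $i=1,\dots,N$; $\frac{dw_{ij}}{dt}=\phi(x_j-x_i)\,f^+(w)_{ij}-\big(1-\phi(x_j-x_i)\big)f^-(w)_{ij}$ for $i\neq j$; $\frac{dw_{ii}}{dt}=0$. Standing assumptions: $\phi$ is Lipschitz continuous, $\phi(r)=\phi(-r)$ for all $r$, and $\phi(0)>0$; initial opinions satisfy $x_1(0)\le x_2(0)\le\dots\le x_N(0)$; $w_{ii}=1$ for all $i$; the initial network $w(0)$ is strongly connected (for all $i,j$ there is a sequence $i=i_0,i_1,\dots,i_m=j$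 with $w_{i_n i_{n+1}}(0)>0$); $f^+$ and $f^-$ are non-negative and Lipschitz continuous; $f^+(w)_{ij}=0$ whenever $w_{ij}=1$; $f^-(w)_{ij}=0$ whenever $w_{ij}=0$. *)

From HB Require Import structures.
From mathcomp Require Import all_boot all_order all_algebra.
From mathcomp Require Import all_classical all_reals all_analysis.
Set Implicit Arguments. Unset Strict Implicit. Unset Printing Implicit Defensive.
Import Order.TTheory GRing.Theory Num.Theory.
Import numFieldNormedType.Exports.
Local Open Scope ring_scope.

Definition weights (R : realType) (N : nat) := 'I_N -> 'I_N -> R.

Definition in_unit_box (R : realType) (N : nat) (w : weights R N) : Prop :=
  forall i j : 'I_N, 0 <= w i j <= 1.

Definition degree (R : realType) (N : nat) (w : weights R N) (i : 'I_N) : R :=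
  \sum_(j < N) w i j.

Definition opinion_rhs (R : realType) (N : nat) (phi : R -> R)
    (x : 'I_N -> R) (w : weights R N) (i : 'I_N) : R :=
  (degree w i)^-1 *
  \sum_(j < N | j != i) w i j * phi (x j - x i) * (x j - x i).

Definition weight_rhs (R : realType) (N : nat) (phi : R -> R)
    (fp fm : weights R N -> weights R N)
    (x : 'I_N -> R) (w : weights R N) (i j : 'I_N) : R :=
  phi (x j - x i) * fp w i j - (1 - phi (x j - x i)) * fm w i j.

Definition wdist (R : realType) (N : nat) (w v : weights R N) : R :=
  \big[Num.max/0]_(i < N) \big[Num.max/0]_(j < N) `|w i j - v i j|.

From HB Require Import structures.
From mathcomp Require Import all_boot all_order all_algebra.
From mathcomp Require Import all_classical all_reals all_analysis.
From mathcomp Require Import ring lra.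
Import Order.TTheory GRing.Theory Num.Theory.
Import numFieldNormedType.Exports.
Set Implicit Arguments. Unset Strict Implicit. Unset Printing Implicit Defensive.
Local Open Scope classical_set_scope.
Local Open Scope ring_scope.

(* After a unit of time every weight w_ij, i <> j, stays above some delta > 0: near
   w_ij = 0 the Lipschitz bounds together with (i) and (ii) give
   dw_ij/dt >= c_phi c_f - B w_ij.  From then on the opinions follow a linear consensus
   system dx_i/dt = sum_j b_ij(t) (x_j - x_i) with 0 <= b_ij <= 1 and b_ij >= beta > 0
   for i <> j.  For such a system upper and lower bounds on all opinions are forward
   invariant, and an interval [m, M] containing all opinions shrinks within unit time by
   a fixed factor 1 - kappa: either all opinions lie above the midpoint, which becomes
   the new lower bound, or some opinion lies below it; by Gronwall that opinion stays a
   definite distance below M for a unit of time, and through the coupling beta it drags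
   every other opinion below M - kappa (M - m).  The opinions are thus eventually
   trapped in intervals of geometrically shrinking width, and the supremum of their
   lower ends is the consensus value. *)

Section RealFacts.
Variable R : realType.

Lemma gronwall (f df : R -> R) (c a b : R) :
  (forall s, a <= s <= b -> is_derive s 1 f (df s)) ->
  (forall s, a <= s <= b -> c * f s <= df s) ->
  forall t, a <= t <= b -> f a * expR (c * (t - a)) <= f t.
Proof.
move=> fd fge t /andP[ast stb].
pose g s := f s * expR (- c * s).
have gd s : a <= s <= b -> is_derive s 1 g ((df s - c * f s) * expR (- c * s)).
  by move=> /fd dfs; apply: is_derive_eq; rewrite /GRing.scale /=; ring.
have gle : g a <= g t.
  apply: (@ger0_derive1_ndecr _ g a b) => //.
  - by move=> s; rewrite in_itv /= => /andP[? ?]; apply: ex_derive; apply: gd; rewrite !ltW.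
  - move=> s; rewrite in_itv /= => /andP[? ?].
    have hs : a <= s <= b by rewrite !ltW.
    have gds := gd s hs; rewrite derive1E derive_val; apply: mulr_ge0; last exact: expR_ge0.
    by rewrite subr_ge0 fge.
  - apply: derivable_within_continuous => s; rewrite in_itv /= => hs.
    by apply: ex_derive; apply: gd.
have -> : f t = g t * expR (c * t).
  by rewrite /g -mulrA -expRD mulNr addNr expR0 mulr1.
have -> : f a * expR (c * (t - a)) = g a * expR (c * t).
  by rewrite /g -mulrA -expRD; congr (_ * expR _); ring.
by rewrite ler_wpM2r ?expR_ge0.
Qed.

Lemma affine_gronwall (y dy : R -> R) (a B t1 t : R) : 0 < B -> t1 <= t ->
  (forall s, t1 <= s <= t -> is_derive s 1 y (dy s)) ->
  (forall s, t1 <= s <= t -> a - B * y s <= dy s) ->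
  a / B + (y t1 - a / B) * expR (- B * (t - t1)) <= y t.
Proof.
move=> B0 t1t yd dyge.
have := @gronwall (fun s => y s - a / B) dy (- B) t1 t.
rewrite -lerBrDl; apply=> //; last by rewrite lexx t1t.
- by move=> s /yd dys; apply: is_derive_eq; rewrite subr0.
- by move=> s /dyge; rewrite mulNr mulrBr [B * (a / B)]mulrC divfK ?gt_eqF // opprB addrC.
Qed.

Lemma expR_tangent (u v : R) : expR u * (v - u) <= expR v - expR u.
Proof.
have -> : expR v = expR u * expR (v - u) by rewrite -expRD addrC subrK.
have := expR_ge1Dx (v - u); have := expR_gt0 u; nra.
Qed.

Lemma ler_sum_term n (F : 'I_n -> R) i :
  (forall j, 0 <= F j) -> F i <= \sum_(j < n) F j.
Proof. by move=> F0; rewrite (bigD1 i) //= lerDl sumr_ge0. Qed.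

Lemma sumr_const_ord n (a : R) : \sum_(i < n) a = n%:R * a.
Proof. by rewrite sumr_const card_ord mulr_natl. Qed.

End RealFacts.

Section Drift.
Variables (R : realType) (N : nat) (c y : 'I_N -> R) (M : R).
Hypotheses (c01 : forall j, 0 <= c j <= 1) (yM : forall j, y j <= M).

Lemma drift_le_sub i :
  \sum_(j < N) c j * (y j - y i) <= N%:R * (M - y i) - \sum_(j < N) c j * (M - y j).
Proof.
rewrite -sumr_const_ord -sumrB.
apply: ler_sum => j _; have /andP[c0 c1] := c01 j.
have yi0 : 0 <= M - y i by rewrite subr_ge0.
have := ler_piMl yi0 c1; lra.
Qed.

Lemma drift_le i : \sum_(j < N) c j * (y j - y i) <= N%:R * (M - y i).
Proof.
apply: le_trans (drift_le_sub i) _; rewrite lerBlDr lerDl.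
by apply: sumr_ge0 => j _; have /andP[c0 _] := c01 j; rewrite mulr_ge0 // subr_ge0.
Qed.

Lemma drift_le_gap i j0 (beta g : R) : beta <= c j0 -> 0 <= g -> g <= M - y j0 ->
  \sum_(j < N) c j * (y j - y i) <= N%:R * (M - y i) - beta * g.
Proof.
move=> cj0 g0 gap; apply: le_trans (drift_le_sub i) _; rewrite lerD2l lerN2.
have /andP[c0 _] := c01 j0.
apply: le_trans (ler_sum_term j0 _); last first.
  by move=> j; have /andP[cj _] := c01 j; rewrite mulr_ge0 // subr_ge0.
by apply: le_trans (ler_wpM2l c0 gap); rewrite ler_wpM2r.
Qed.

End Drift.

Section Windows.
Variables (R : realType) (N : nat).

Definition eventually_within (x : R -> 'I_N -> R) (m M : R) :=
  exists t0 : R, forall t, t0 <= t -> forall i, m <= x t i <= M.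

Lemma eventually_within_cross x m1 M1 m2 M2 : (0 < N)%N ->
  eventually_within x m1 M1 -> eventually_within x m2 M2 -> m1 <= M2.
Proof.
move=> N0 [t1 h1] [t2 h2]; pose i0 := Ordinal N0.
have t1t : t1 <= Num.max t1 t2 by rewrite le_max lexx.
have t2t : t2 <= Num.max t1 t2 by rewrite le_max lexx orbT.
have /andP[m1x _] := h1 _ t1t i0; have /andP[_ xM2] := h2 _ t2t i0.
exact: le_trans m1x xM2.
Qed.

Lemma cvg_eventually_within x m M : (0 < N)%N -> eventually_within x m M ->
  (forall eps, 0 < eps -> exists m' M', eventually_within x m' M' /\ M' - m' <= eps) ->
  exists xs, m <= xs <= M /\ forall i, x t i @[t --> +oo] --> xs.
Proof.
move=> N0 within shrink.
pose S := [set m' | exists M', eventually_within x m' M'].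
have supS : has_sup S.
  split; first by exists m, M.
  by exists M => m' [M' h]; exact: eventually_within_cross h within.
have below m' M' : eventually_within x m' M' -> m' <= sup S.
  by move=> h; apply: (sup_upper_bound supS); exists M'.
have above m' M' : eventually_within x m' M' -> sup S <= M'.
  move=> h; apply: ge_sup; first exact: supS.1.
  by move=> m'' [M'' h']; exact: eventually_within_cross h' h.
exists (sup S); split; first by rewrite (below _ _ within) (above _ _ within).
move=> i; apply/cvgrPdist_le => eps eps0.
have [m' [M' [h width]]] := shrink eps eps0.
have := below _ _ h; have := above _ _ h; case: h => t0 h lo hi.
apply: filterS (nbhs_pinfty_ge (num_real t0)) => t /h /(_ i) /andP[? ?].
by rewrite ler_norml; apply/andP; split; lra.
Qed.

End Windows.

Section LinearConsensus.
Variables (R : realType) (N : nat) (b : R -> 'I_N -> 'I_N -> R).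
Hypothesis b_unit : forall t : R, 0 < t -> forall i j, 0 <= b t i j <= 1.

Definition consensus_solution (x : R -> 'I_N -> R) :=
  forall t : R, 0 < t -> forall i : 'I_N,
    is_derive t 1 (fun s => x s i) (\sum_(j < N) b t i j * (x t j - x t i)).

Lemma consensus_solutionN x :
  consensus_solution x -> consensus_solution (fun t i => - x t i).
Proof.
move=> sx t t0 i; have dx := sx t t0 i.
by apply: is_derive_eq; rewrite -sumrN; apply: eq_bigr => j _; ring.
Qed.

(* A smooth stand-in for max_k x_k, which need not be differentiable. *)
Definition exp_potential (x : R -> 'I_N -> R) (lam U s : R) :=
  \sum_(k < N) expR (lam * (x s k - U)).

Lemma exp_potential_derive x (lam U s : R) : consensus_solution x -> 0 < s ->
  is_derive s 1 (exp_potential x lam U) (\sum_(k < N)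
    expR (lam * (x s k - U)) * (lam * \sum_(j < N) b s k j * (x s j - x s k))).
Proof.
move=> sx s0.
have -> : exp_potential x lam U = \sum_(k < N) (fun s => expR (lam * (x s k - U))).
  by rewrite fct_sumE.
apply: is_derive_sum => k; have dx := sx s s0 k.
by apply: is_derive_eq; rewrite /GRing.scale /= subr0.
Qed.

Lemma exp_potential_growth x (lam U t1 t : R) : consensus_solution x -> 0 < t1 -> t1 <= t ->
  exp_potential x lam U t <= exp_potential x lam U t1 * expR (N%:R * (t - t1)).
Proof.
move=> sx t10 t1t.
pose e s k := expR (lam * (x s k - U)).
pose dG s := \sum_(k < N) e s k * (lam * \sum_(j < N) b s k j * (x s j - x s k)).
have growth s : 0 < s -> dG s <= N%:R * exp_potential x lam U s.
  move=> s0; rewrite -sumr_const_ord.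
  apply: ler_sum => k _; rewrite !mulr_sumr; apply: ler_sum => j _.
  have /andP[b0 b1] := b_unit s0 k j.
  have tangent := expR_tangent (lam * (x s k - U)) (lam * (x s j - U)).
  have := expR_gt0 (lam * (x s k - U)); have := expR_gt0 (lam * (x s j - U)).
  have -> : e s k * (lam * (b s k j * (x s j - x s k))) =
    b s k j * (e s k * (lam * (x s j - U) - lam * (x s k - U))) by ring.
  rewrite /e; nra.
suff : - exp_potential x lam U t1 * expR (N%:R * (t - t1)) <= - exp_potential x lam U t.
  by rewrite mulNr lerN2.
apply: (@gronwall _ (fun s => - exp_potential x lam U s) (fun s => - dG s) _ t1 t);
  last by rewrite lexx t1t.
- by move=> s /andP[s1 _]; apply: is_deriveN; apply: exp_potential_derive => //; lra.
- by move=> s /andP[s1 _]; rewrite mulrN lerN2; apply: growth; lra.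
Qed.

Lemma consensus_le_invariant x (t1 U : R) : consensus_solution x -> 0 < t1 ->
  (forall j, x t1 j <= U) -> forall t, t1 <= t -> forall i, x t i <= U.
Proof.
move=> sx t10 xU t t1t i; rewrite leNgt; apply/negP => Ux.
pose C := N%:R * expR (N%:R * (t - t1)).
(* lam is so large that x t i > U would lift the potential at time t above its
   Gronwall bound C. *)
pose lam := (C + 1) / (x t i - U).
have C0 : 0 <= C by rewrite mulr_ge0 ?expR_ge0.
have lam0 : 0 < lam by rewrite divr_gt0 ?subr_gt0 //; lra.
have start : exp_potential x lam U t1 <= N%:R.
  rewrite -[N%:R]mulr1 -sumr_const_ord; apply: ler_sum => k _.
  by rewrite expR_le1 pmulr_rle0 // subr_le0.
have blowup : C + 2 <= exp_potential x lam U t.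
  apply: le_trans (ler_sum_term i (fun k => expR_ge0 _)).
  rewrite /lam divfK ?gt_eqF ?subr_gt0 //; have := expR_ge1Dx (C + 1); lra.
have := exp_potential_growth lam U sx t10 t1t.
have := expR_gt0 (N%:R * (t - t1)); rewrite /C in blowup; nra.
Qed.

Lemma consensus_ge_invariant x (t1 L : R) : consensus_solution x -> 0 < t1 ->
  (forall j, L <= x t1 j) -> forall t, t1 <= t -> forall i, L <= x t i.
Proof.
move=> sx t10 Lx t t1t i; rewrite -lerN2.
by apply: (consensus_le_invariant (consensus_solutionN sx) t10) => // j; rewrite lerN2.
Qed.

Section UniformCoupling.
Variables (x : R -> 'I_N -> R) (beta T : R).
Hypotheses (sx : consensus_solution x) (T0 : 0 < T) (beta01 : 0 < beta <= 1).
Hypothesis b_ge : forall t, T <= t -> forall i j, i != j -> beta <= b t i j.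

(* An opinion below the midpoint of [m, M] keeps a gap (M - m)/2 e^(-N) to M during a
   unit of time (upper_gap_decay); through the coupling it opens a gap beta/N times as
   large, up to the factor 1 - e^(-N), at every other opinion (upper_gap_spread). *)
Definition contraction_rate :=
  beta * expR (- N%:R) * (1 - expR (- N%:R)) / (2 * N%:R).

Lemma contraction_rate_gt0 : (0 < N)%N -> 0 < contraction_rate.
Proof.
move=> N0; have Npos : 0 < N%:R :> R by rewrite ltr0n.
have e1 : expR (- N%:R) < 1 :> R by rewrite expR_lt1 oppr_lt0.
case/andP: beta01 => b0 _.
by rewrite /contraction_rate divr_gt0 ?mulr_gt0 ?subr_gt0 ?expR_gt0.
Qed.

Lemma contraction_rate_le : (0 < N)%N -> contraction_rate <= expR (- N%:R) / 2.
Proof.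
move=> N0; have N1 : 1 <= N%:R :> R by rewrite ler1n.
have := expR_gt0 (- N%:R : R); case/andP: beta01 => b0 b1 e0.
have key : beta * (1 - expR (- N%:R)) <= N%:R by nra.
rewrite /contraction_rate ler_pdivrMr ?mulr_gt0 //; last lra.
rewrite mulrA divfK ?pnatr_eq0 //; nra.
Qed.

Lemma contraction_rate_le_half : (0 < N)%N -> contraction_rate <= 1 / 2.
Proof.
move=> N0; have := contraction_rate_le N0.
have : expR (- N%:R) <= 1 :> R by rewrite expR_le1 oppr_le0.
lra.
Qed.

Lemma upper_gap_decay k (M t1 t : R) : 0 < t1 -> t1 <= t ->
  (forall s, t1 <= s -> forall j, x s j <= M) ->
  (M - x t1 k) * expR (- N%:R * (t - t1)) <= M - x t k.
Proof.
move=> t10 t1t xM.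
apply: (@gronwall _ (fun s => M - x s k)
  (fun s => - \sum_(j < N) b s k j * (x s j - x s k)) _ t1 t); last by rewrite lexx t1t.
- move=> s /andP[s1 _]; have dx := sx (lt_le_trans t10 s1) k.
  by apply: is_derive_eq; rewrite add0r mul1r.
- move=> s /andP[s1 _]; rewrite mulNr lerN2.
  exact: drift_le (b_unit (lt_le_trans t10 s1) k) (xM s s1) k.
Qed.

Lemma upper_gap_spread i j0 (g M t1 t : R) : (0 < N)%N -> 0 < t1 -> T <= t1 ->
  i != j0 -> t1 <= t -> 0 <= g ->
  (forall s, t1 <= s -> forall j, x s j <= M) ->
  (forall s, t1 <= s <= t -> g <= M - x s j0) ->
  beta * g / N%:R * (1 - expR (- N%:R * (t - t1))) <= M - x t i.
Proof.
move=> N0 t10 Tt1 ij0 t1t g0 xM gap.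
have Npos : 0 < N%:R :> R by rewrite ltr0n.
have : beta * g / N%:R + (M - x t1 i - beta * g / N%:R) * expR (- N%:R * (t - t1))
    <= M - x t i.
  apply: (@affine_gronwall _ (fun s => M - x s i)
    (fun s => - \sum_(j < N) b s i j * (x s j - x s i))) => //.
  - move=> s /andP[s1 _]; have dx := sx (lt_le_trans t10 s1) i.
    by apply: is_derive_eq; rewrite add0r mul1r.
  - move=> s /[dup] /andP[s1 _] hs; have s0 := lt_le_trans t10 s1.
    have := drift_le_gap (b_unit s0 i) (xM s s1) i
      (b_ge (le_trans Tt1 s1) ij0) g0 (gap s hs).
    lra.
have xM1 : 0 <= M - x t1 i by rewrite subr_ge0 xM.
have := mulr_ge0 xM1 (expR_ge0 (- N%:R * (t - t1))); lra.
Qed.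

Lemma contraction_from_low j0 (m M t1 : R) : (0 < N)%N -> 0 < t1 -> T <= t1 ->
  (forall t, t1 <= t -> forall i, m <= x t i <= M) -> x t1 j0 <= (m + M) / 2 ->
  forall t, t1 + 1 <= t -> forall i, x t i <= M - contraction_rate * (M - m).
Proof.
move=> N0 t10 Tt1 within low.
have Npos : 0 < N%:R :> R by rewrite ltr0n.
have xM s : t1 <= s -> forall j, x s j <= M by move=> s1 j; case/andP: (within s s1 j).
have mM : 0 <= M - m by case/andP: (within t1 (lexx _) j0) => ? ?; lra.
pose gam := (M - m) / 2 * expR (- N%:R).
have gam0 : 0 <= gam by rewrite mulr_ge0 ?expR_ge0 //; lra.
have gap s : t1 <= s <= t1 + 1 -> gam <= M - x s j0.
  move=> /andP[s1 s2].
  apply: le_trans (upper_gap_decay j0 t10 s1 xM).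
  apply: ler_pM; rewrite ?expR_ge0 //; [lra | lra | rewrite ler_expR; nra].
have rate_gam : contraction_rate * (M - m) =
    beta * gam / N%:R * (1 - expR (- N%:R * (t1 + 1 - t1))).
  rewrite /contraction_rate /gam addrAC subrr add0r mulr1; field.
  by rewrite pnatr_eq0 -lt0n.
apply: consensus_le_invariant => //; first lra.
move=> j; suff : contraction_rate * (M - m) <= M - x (t1 + 1) j by lra.
have t1t1 : t1 <= t1 + 1 by lra.
have [->|jj0] := eqVneq j j0.
  apply: le_trans (gap (t1 + 1) _); last by rewrite t1t1 lexx.
  have := ler_wpM2r mM (contraction_rate_le N0).
  suff -> : gam = expR (- N%:R) / 2 * (M - m) by [].
  by rewrite /gam; ring.
rewrite rate_gam; apply: (upper_gap_spread N0 t10 Tt1 jj0 t1t1 gam0) => //.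
Qed.

Lemma consensus_contraction (m M t1 : R) : (0 < N)%N -> 0 < t1 -> T <= t1 ->
  (forall t, t1 <= t -> forall i, m <= x t i <= M) ->
  exists m' M', (forall t, t1 + 1 <= t -> forall i, m' <= x t i <= M') /\
    M' - m' <= (1 - contraction_rate) * (M - m).
Proof.
move=> N0 t10 Tt1 within.
have i0 := Ordinal N0.
have mM : 0 <= M - m by case/andP: (within t1 (lexx _) i0) => ? ?; lra.
have rate_half := contraction_rate_le_half N0.
have t1t1 : t1 <= t1 + 1 by lra.
case: (boolP [exists j, x t1 j <= (m + M) / 2]) => [/existsP[j0 low]|/existsPn high].
  exists m, (M - contraction_rate * (M - m)); split; last lra.
  move=> t t1t i; apply/andP; split; first by case/andP: (within t (le_trans t1t1 t1t) i).
  exact: (contraction_from_low N0 t10 Tt1 within low).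
exists ((m + M) / 2), M; split; last by nra.
move=> t t1t i; apply/andP; split; last by case/andP: (within t (le_trans t1t1 t1t) i).
apply: (consensus_ge_invariant sx t10 _ (le_trans t1t1 t1t)) => j.
by have := high j; rewrite -ltNge => /ltW.
Qed.

Lemma eventually_within_contraction m M : (0 < N)%N -> eventually_within x m M ->
  exists m' M', eventually_within x m' M' /\
    M' - m' <= (1 - contraction_rate) * (M - m).
Proof.
move=> N0 [t0 within].
have Tt1 : T <= Num.max t0 T by rewrite le_max lexx orbT.
have t0t1 : t0 <= Num.max t0 T by rewrite le_max lexx.
have [m' [M' [h width]]] := consensus_contraction N0 (lt_le_trans T0 Tt1) Tt1
  (fun t t1t => within t (le_trans t0t1 t1t)).
by exists m', M'; split => //; exists (Num.max t0 T + 1).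
Qed.

Lemma eventually_within_geometric m M n : (0 < N)%N -> eventually_within x m M ->
  exists m' M', eventually_within x m' M' /\
    M' - m' <= (1 - contraction_rate) ^+ n * (M - m).
Proof.
move=> N0 within; elim: n => [|n [m' [M' [h width]]]].
  by exists m, M; rewrite expr0 mul1r.
have [m'' [M'' [h' width']]] := eventually_within_contraction N0 h.
exists m'', M''; split => //; apply: le_trans width' _.
rewrite exprS -mulrA ler_wpM2l //; have := contraction_rate_le_half N0; lra.
Qed.

Lemma uniform_coupling_consensus m M : (0 < N)%N -> eventually_within x m M ->
  exists xs, m <= xs <= M /\ forall i, x t i @[t --> +oo] --> xs.
Proof.
move=> N0 within; apply: cvg_eventually_within => // eps eps0.
have mM : 0 <= M - m by have := eventually_within_cross N0 within within; lra.
have rate0 := contraction_rate_gt0 N0.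
have rate_half := contraction_rate_le_half N0.
have q0 : 0 <= 1 - contraction_rate by lra.
have rate1 : `|1 - contraction_rate| < 1 by rewrite ger0_norm; lra.
have e0 : 0 < eps / (M - m + 1) by rewrite divr_gt0 //; lra.
have := cvg_expr rate1; move/cvgrPdist_le/(_ _ e0) => [n0 _ /(_ n0 (leqnn n0))].
rewrite sub0r normrN ger0_norm ?exprn_ge0 // ler_pdivlMr; last lra.
move=> small; have [m' [M' [h width]]] := eventually_within_geometric n0 N0 within.
exists m', M'; split => //; apply: le_trans width _; nra.
Qed.

End UniformCoupling.

End LinearConsensus.

Lemma linear_consensus (R : realType) (N : nat) (b : R -> 'I_N -> 'I_N -> R)
    (x : R -> 'I_N -> R) (beta T m M : R) : (0 < N)%N ->
  (forall t, 0 < t -> forall i j, 0 <= b t i j <= 1) -> consensus_solution b x ->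
  0 < T -> 0 < beta -> (forall t, T <= t -> forall i j, i != j -> beta <= b t i j) ->
  eventually_within x m M ->
  exists xs, m <= xs <= M /\ forall i, x t i @[t --> +oo] --> xs.
Proof.
move=> N0 b01 sx T0 beta0 b_ge.
apply: (uniform_coupling_consensus b01 (beta := Num.min beta 1) sx T0) => //.
- by rewrite lt_min beta0 ltr01 ge_min lexx orbT.
- by move=> t Tt i j ij; rewrite ge_min b_ge.
Qed.

Section ZeroEntry.
Variables (R : realType) (N : nat).

(* Hypothesis (ii) and f^- = 0 only speak about matrices with a vanishing entry;
   Lipschitz continuity transfers them to v at the cost of |L| v_ij. *)
Definition zero_entry (v : weights R N) (i j : 'I_N) : weights R N :=
  fun p q => if (p == i) && (q == j) then 0 else v p q.

Lemma zero_entry_unit_box v i j : in_unit_box v -> in_unit_box (zero_entry v i j).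
Proof. by move=> box p q; rewrite /zero_entry; case: ifP => _ //; rewrite lexx ler01. Qed.

Lemma wdist_zero_entry v i j : 0 <= v i j -> wdist v (zero_entry v i j) <= v i j.
Proof.
move=> vij0; apply: bigmax_le => // p _; apply: bigmax_le => // q _.
rewrite /zero_entry; case: ifP => [/andP[/eqP -> /eqP ->]|_].
  by rewrite subr0 ger0_norm.
by rewrite subrr normr0.
Qed.

Lemma lipschitz_zero_entry (F : weights R N -> weights R N) (L : R) v i j :
  (forall v u, in_unit_box v -> in_unit_box u ->
     forall i j, `|F v i j - F u i j| <= L * wdist v u) ->
  in_unit_box v -> `|F v i j - F (zero_entry v i j) i j| <= `|L| * v i j.
Proof.
move=> lip box; have /andP[vij0 _] := box i j.
apply: le_trans (lip _ _ box (zero_entry_unit_box i j box) i j) _.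
have d0 : 0 <= wdist v (zero_entry v i j) by exact: bigmax_ge_id.
apply: le_trans (ler_wpM2r d0 (ler_norm L)) _.
by rewrite ler_wpM2l // wdist_zero_entry.
Qed.

End ZeroEntry.

Section OpinionNetwork.
Variables (R : realType) (N : nat) (phi : R -> R).

Definition opinion_coef (y : 'I_N -> R) (v : weights R N) (i j : 'I_N) :=
  (degree v i)^-1 * (v i j * phi (y j - y i)).

Lemma opinion_rhsE y v i :
  opinion_rhs phi y v i = \sum_(j < N) opinion_coef y v i j * (y j - y i).
Proof.
rewrite /opinion_rhs mulr_sumr [RHS](bigD1 i) //= subrr mulr0 add0r.
by apply: eq_bigr => j _; rewrite /opinion_coef; ring.
Qed.

Lemma degree_ge_entry (v : weights R N) i j : in_unit_box v -> v i j <= degree v i.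
Proof. by move=> box; apply: ler_sum_term => k; case/andP: (box i k). Qed.

Lemma degree_le (v : weights R N) i : in_unit_box v -> degree v i <= N%:R.
Proof.
move=> box; rewrite -[N%:R]mulr1 -sumr_const_ord.
by apply: ler_sum => k _; case/andP: (box i k).
Qed.

Lemma opinion_coef_unit y v i j : in_unit_box v -> v i i = 1 ->
  0 <= phi (y j - y i) <= 1 -> 0 <= opinion_coef y v i j <= 1.
Proof.
move=> box vii /andP[p0 p1].
have k1 : 1 <= degree v i by rewrite -vii degree_ge_entry.
have kij := degree_ge_entry i j box.
have /andP[v0 v1] := box i j.
rewrite /opinion_coef mulr_ge0 ?invr_ge0 ?mulr_ge0 //=; last lra.
rewrite mulrC ler_pdivrMr; [nra | lra].
Qed.

Lemma opinion_coef_ge y v i j (delta c : R) : (0 < N)%N -> in_unit_box v -> v i i = 1 ->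
  0 <= delta <= v i j -> 0 <= c <= phi (y j - y i) ->
  delta * c / N%:R <= opinion_coef y v i j.
Proof.
move=> N0 box vii /andP[d0 dv] /andP[c0 cp].
have k1 : 1 <= degree v i by rewrite -vii degree_ge_entry.
have Npos : 0 < N%:R :> R by rewrite ltr0n.
rewrite /opinion_coef mulrC; apply: ler_pM; rewrite ?mulr_ge0 ?invr_ge0 //.
- by rewrite lef_pV2 ?posrE ?degree_le //; lra.
- exact: ler_pM.
Qed.

Variables (x : R -> 'I_N -> R) (w : R -> weights R N).
Hypotheses (phi_unit : forall r, -2 <= r <= 2 -> 0 <= phi r <= 1)
  (x_unit : forall t, 0 <= t -> forall i, -1 <= x t i <= 1)
  (w_unit : forall t, 0 <= t -> in_unit_box (w t))
  (w_diag : forall t, 0 <= t -> forall i, w t i i = 1).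

Lemma opinion_diff_bound t i j : 0 <= t -> -2 <= x t j - x t i <= 2.
Proof.
move=> t0; have /andP[? ?] := x_unit t0 i; have /andP[? ?] := x_unit t0 j.
by apply/andP; split; lra.
Qed.

Lemma opinion_coef_bounded t : 0 < t ->
  forall i j, 0 <= opinion_coef (x t) (w t) i j <= 1.
Proof.
move=> /ltW t0 i j.
apply: opinion_coef_unit; [exact: w_unit | exact: w_diag | ].
exact/phi_unit/opinion_diff_bound.
Qed.

Lemma opinion_consensus_solution :
  (forall t : R, 0 < t -> forall i,
     is_derive t 1 (fun s => x s i) (opinion_rhs phi (x t) (w t) i)) ->
  consensus_solution (fun t => opinion_coef (x t) (w t)) x.
Proof. by move=> xd t t0 i; rewrite -opinion_rhsE; exact: xd. Qed.

Variable cphi : R.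
Hypotheses (cphi0 : 0 < cphi) (phi_gt : forall r, -2 <= r <= 2 -> cphi < phi r).

Lemma opinion_coef_uniform (delta T : R) : (0 < N)%N -> 0 <= T -> 0 <= delta ->
  (forall t, T <= t -> forall i j, i != j -> delta <= w t i j) ->
  forall t, T <= t -> forall i j, i != j ->
    delta * cphi / N%:R <= opinion_coef (x t) (w t) i j.
Proof.
move=> N0 T0 d0 w_ge t Tt i j ij; have t0 := le_trans T0 Tt.
apply: opinion_coef_ge; [done | exact: w_unit | exact: w_diag | | ].
- by rewrite d0 w_ge.
- by rewrite ltW // ltW // phi_gt // opinion_diff_bound.
Qed.

Variables (fp fm : weights R N -> weights R N) (L1 L2 cf : R).
Hypotheses (fm_ge0 : forall v, in_unit_box v -> forall i j, 0 <= fm v i j)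
  (fp_lip : forall v u, in_unit_box v -> in_unit_box u ->
     forall i j, `|fp v i j - fp u i j| <= L1 * wdist v u)
  (fm_lip : forall v u, in_unit_box v -> in_unit_box u ->
     forall i j, `|fm v i j - fm u i j| <= L2 * wdist v u)
  (fm_zero : forall v, in_unit_box v -> forall i j, v i j = 0 -> fm v i j = 0)
  (cf0 : 0 < cf)
  (fp_gt : forall v, in_unit_box v ->
     forall i j, i != j -> v i j = 0 -> cf < fp v i j).

Lemma weight_rhs_ge y v i j : in_unit_box v -> i != j -> -2 <= y j - y i <= 2 ->
  cphi * cf - (`|L1| + `|L2|) * v i j <= weight_rhs phi fp fm y v i j.
Proof.
move=> box ij yr; have /andP[v0 _] := box i j.
have ubox := zero_entry_unit_box i j box.
have uij : zero_entry v i j i j = 0 by rewrite /zero_entry !eqxx.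
have fp_low : cf - `|L1| * v i j <= fp v i j.
  have := fp_gt ubox ij uij; have := lipschitz_zero_entry i j fp_lip box.
  have := ler_norm (fp (zero_entry v i j) i j - fp v i j); rewrite distrC; lra.
have fm_up : fm v i j <= `|L2| * v i j.
  have := lipschitz_zero_entry i j fm_lip box; rewrite (fm_zero ubox uij) subr0.
  exact/le_trans/ler_norm.
rewrite /weight_rhs; set P := phi _.
have /andP[p0 p1] : 0 <= P <= 1 by exact: phi_unit.
have pc : cphi < P := phi_gt yr.
have := ler_wpM2l p0 fp_low; have := ler_wpM2r (ltW cf0) (ltW pc).
have := ler_piMl (mulr_ge0 (normr_ge0 L1) v0) p1.
have P1 : 1 - P <= 1 by lra.
have := ler_piMl (fm_ge0 box i j) P1; lra.
Qed.

Hypothesis w_deriv : forall t : R, 0 < t -> forall i j, i != j ->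
  is_derive t 1 (fun s => w s i j) (weight_rhs phi fp fm (x t) (w t) i j).

Lemma weights_eventually_ge : exists delta, 0 < delta /\
  forall t, 2 <= t -> forall i j, i != j -> delta <= w t i j.
Proof.
pose B := `|L1| + `|L2| + 1.
have B0 : 0 < B by rewrite /B; have := normr_ge0 L1; have := normr_ge0 L2; lra.
have a0 : 0 < cphi * cf by rewrite mulr_gt0.
have eB : expR (- B) < 1 by rewrite expR_lt1 oppr_lt0.
exists (cphi * cf / B * (1 - expR (- B))); split.
  by rewrite mulr_gt0 ?divr_gt0 ?subr_gt0.
move=> t t2 i j ij.
have : cphi * cf / B + (w 1 i j - cphi * cf / B) * expR (- B * (t - 1)) <= w t i j.
  apply: (@affine_gronwall _ (fun s => w s i j)
    (fun s => weight_rhs phi fp fm (x s) (w s) i j)) => //; first lra.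
  - by move=> s /andP[s1 _]; apply: w_deriv ij; lra.
  - move=> s /andP[s1 _]; have s0 : 0 <= s by lra.
    have := weight_rhs_ge (w_unit s0) ij (opinion_diff_bound i j s0).
    have /andP[w0 _] := w_unit s0 i j; rewrite /B; lra.
have /andP[w10 _] := w_unit ler01 i j.
have : expR (- B * (t - 1)) <= expR (- B) by rewrite ler_expR; nra.
have := expR_gt0 (- B * (t - 1)); have := divr_gt0 a0 B0; nra.
Qed.

End OpinionNetwork.

Unset Implicit Arguments.

Theorem proposition1 (R : realType) (N : nat)
  (phi : R -> R) (fp fm : weights R N -> weights R N)
  (x : R -> 'I_N -> R) (w : R -> weights R N) :
  (* phi : [-2,2] -> [0,1], Lipschitz, even, phi 0 > 0 *)
  (forall r : R, -2 <= r <= 2 -> 0 <= phi r <= 1) ->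
  (exists L : R, forall r s : R, -2 <= r <= 2 -> -2 <= s <= 2 ->
     `|phi r - phi s| <= L * `|r - s|) ->
  (forall r : R, -2 <= r <= 2 -> phi r = phi (- r)) ->
  0 < phi 0 ->
  (* f^+, f^- : nonnegative, Lipschitz on [0,1]^{NxN} *)
  (forall v : weights R N, in_unit_box v -> forall i j, 0 <= fp v i j) ->
  (forall v : weights R N, in_unit_box v -> forall i j, 0 <= fm v i j) ->
  (exists L : R, forall v u : weights R N, in_unit_box v -> in_unit_box u ->
     forall i j, `|fp v i j - fp u i j| <= L * wdist v u) ->
  (exists L : R, forall v u : weights R N, in_unit_box v -> in_unit_box u ->
     forall i j, `|fm v i j - fm u i j| <= L * wdist v u) ->
  (forall v : weights R N, in_unit_box v -> forall i j, v i j = 1 -> fp v i j = 0) ->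
  (forall v : weights R N, in_unit_box v -> forall i j, v i j = 0 -> fm v i j = 0) ->
  (* additional hypotheses (i) and (ii) *)
  (exists cphi : R, 0 < cphi /\ forall r : R, -2 <= r <= 2 -> cphi < phi r) ->
  (exists cf : R, 0 < cf /\ forall v : weights R N, in_unit_box v ->
     forall i j : 'I_N, i != j -> v i j = 0 -> cf < fp v i j) ->
  (* (x, w) is a solution on [0, +oo) with values in [-1,1] and [0,1] *)
  (forall t : R, 0 <= t -> forall i, -1 <= x t i <= 1) ->
  (forall t : R, 0 <= t -> in_unit_box (w t)) ->
  (forall t : R, 0 <= t -> forall i, w t i i = 1) ->
  (forall i, (fun s => x s i) @ 0^'+ --> x 0 i) ->
  (forall i j, (fun s => w s i j) @ 0^'+ --> w 0 i j) ->
  (forall t : R, 0 < t -> forall i,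
     is_derive t 1 (fun s => x s i) (opinion_rhs phi (x t) (w t) i)) ->
  (forall t : R, 0 < t -> forall i j, i != j ->
     is_derive t 1 (fun s => w s i j) (weight_rhs phi fp fm (x t) (w t) i j)) ->
  (* initial conditions *)
  (forall i j : 'I_N, (i <= j)%N -> x 0 i <= x 0 j) ->
  (forall i j : 'I_N, connect (fun a b => 0 < w 0 a b) i j) ->
  (* consensus *)
  exists xs : R, -1 <= xs <= 1 /\
    forall i : 'I_N, x t i @[t --> +oo] --> xs.
Proof.
move=> phi_unit _ _ _ _ fm_ge0 [L1 fp_lip] [L2 fm_lip] _ fm_zero [cphi [cphi0 phi_gt]]
  [cf [cf0 fp_gt]] x_unit w_unit w_diag _ _ x_deriv w_deriv _ _.
have [N0|N0] := posnP N.
  exists 0; split=> [|i]; first by rewrite lerN10 ler01.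
  by have := ltn_ord i; rewrite [X in (_ < X)%N]N0.
have [delta [delta0 w_ge]] := weights_eventually_ge phi_unit x_unit w_unit cphi0
  phi_gt fm_ge0 fp_lip fm_lip fm_zero cf0 fp_gt w_deriv.
apply: (linear_consensus (b := fun t => opinion_coef phi (x t) (w t))
  (beta := delta * cphi / N%:R) (T := 2)) => //.
- exact: opinion_coef_bounded.
- exact: opinion_consensus_solution.
- by rewrite divr_gt0 ?mulr_gt0 ?ltr0n.
- by apply: opinion_coef_uniform => //; rewrite ltW.
- by exists 0.
Qed.
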